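(* The operad $\mathrm{Prim}\,\mathcal Mag$ (and also the operad $\mathrm{Prim}\,\mathcal Mag_\omega$) cannot be generated by binary and ternary operations; i.e. $\mathrm{Prim}\,\mathcal Mag(4)$ (resp. $\mathrm{Prim}\,\mathcal Mag_\omega(4)$) is not contained in the span of the elements obtained from elements of arity $2$ and $3$ by iterated operadic composition (substitution) and the symmetric group actions.
   Context: $K$ is a field of characteristic $0$. A planar rooted tree is reduced if no vertex has exactly one incoming edge. $K\{x_1,\dots,x_n\}_\infty$ is the $K$-vector space with basis the empty tree $1$ and all planar reduced rooted trees with leaves labelled by $x_1,\dots,x_n$; for $k\ge2$, $\vee^k$ grafts $k$ nonempty trees (in order) onto a new root, extended multilinearly, with unit conventions (arguments $1$ omitted, $\vee^1=\mathrm{id}$, $\vee^k(1,\dots,1)=1$); it is the free unitary $\mathcal Mag_\omega$-algebra. $K\{x_1,\dots,x_n\}$ is its subspace spanned by $1$ and binary trees, the free unitary magma algebra with $a\cdot b=\vee^2(a,b)$. Tensor squares carry the operations componentwise, and the co-addition $\Delta_a$ is the unique unital homomorphism with $\Delta_a(x_i)=x_i\otimes1+1\otimes x_i$; $f$ is primitive if $\Delta_a(f)=f\otimes1+1\otimes f$. $\mathrm{Prim}\,\mathcal Mag(n)$ (resp. $\mathrm{Prim}\,\mathcal Mag_\omega(n)$) is the space of primitive multilinear elements of degree $n$ in $x_1,\dots,x_n$ of $K\{x_1,\dots,x_n\}$ (resp. $K\{x_1,\dots,x_n\}_\infty$); these form operads whose composition is substitution of primitive elements for the variables, with $\Sigma_n$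 acting by permuting variables. *)

From HB Require Import structures.
From mathcomp Require Import all_boot all_algebra all_fingroup.
From mathcomp Require Import finmap.
From mathcomp.multinomials Require Import monalg.

Set Implicit Arguments.
Unset Strict Implicit.
Unset Printing Implicit Defensive.

Import GRing.Theory.
Local Open Scope ring_scope.

(* Planar rooted trees with leaves labelled by naturals (leaf [PLeaf i]
   stands for the variable x_i; variables are indexed from 0, so
   "multilinear of degree n in x_1..x_n" becomes "in x_0..x_(n-1)").
   [PEmpty] is the empty tree 1; [PNode ts] is the planar tree whose root
   has the children ts (in order). Only "valid" trees are used as basis
   elements: PEmpty, or reduced nonempty trees (see [reduced]). *)
Inductive ptree := PEmpty | PLeaf of nat | PNode of seq ptree.

Fixpoint ptree_enc (t : ptree) : GenTree.tree nat :=
  match t with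
  | PEmpty => GenTree.Node 0 [::]
  | PLeaf n => GenTree.Leaf n
  | PNode ts => GenTree.Node 1 (map ptree_enc ts)
  end.

Fixpoint ptree_dec (g : GenTree.tree nat) : ptree :=
  match g with
  | GenTree.Leaf n => PLeaf n
  | GenTree.Node 0 _ => PEmpty
  | GenTree.Node _ gs => PNode (map ptree_dec gs)
  end.

Fixpoint ptree_encK (t : ptree) : ptree_dec (ptree_enc t) = t :=
  match t with
  | PEmpty => erefl
  | PLeaf n => erefl
  | PNode ts =>
      f_equal PNode
        ((fix F (s : seq ptree) : map ptree_dec (map ptree_enc s) = s :=
            match s with
            | [::] => erefl
            | x :: s' => f_equal2 cons (ptree_encK x) (F s')
            end) ts)
  end.

HB.instance Definition _ := Countable.copy ptree (can_type ptree_encK).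

Fixpoint reduced (t : ptree) : bool :=
  match t with
  | PEmpty => false
  | PLeaf _ => true
  | PNode ts => (1 < size ts)%N && all reduced ts
  end.

Fixpoint binary (t : ptree) : bool :=
  match t with
  | PNode ts => (size ts == 2)%N && all binary ts
  | _ => true
  end.

Fixpoint leaves (t : ptree) : seq nat :=
  match t with
  | PEmpty => [::]
  | PLeaf i => [:: i]
  | PNode ts => flatten (map leaves ts)
  end.

(* grafting on a new root, with the unit conventions: empty trees are
   omitted, grafting one tree is the identity, grafting none gives 1 *)
Definition graft (ts : seq ptree) : ptree :=
  match [seq t <- ts | t != PEmpty] with
  | [::] => PEmpty
  | [:: t] => t
  | ts' => PNode ts'
  end.

Definition graft2 (ps : seq (ptree * ptree)) : ptree * ptree :=
  (graft (map fst ps), graft (map snd ps)).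

Section Algebra.
Variable K : fieldType.

Fixpoint lin_lists (X : choiceType) (fs : seq {malg K[X]}) : seq (K * seq X) :=
  match fs with
  | [::] => [:: (1, [::])]
  | f :: fs' =>
      [seq (f@_x * c.1, x :: c.2) | x <- (msupp f : seq X), c <- lin_lists fs']
  end.

Definition mlin (X : choiceType) (g : seq X -> X) (fs : seq {malg K[X]})
  : {malg K[X]} :=
  \sum_(c <- lin_lists fs) c.1 *: << g c.2 >>.

Definition Alg := @malg ptree K.
(* its tensor square, with basis the pairs of trees *)
Definition Alg2 := @malg (ptree * ptree)%type K.

Definition tr (t : ptree) : Alg := << t >>.
Definition xvar (i : nat) : Alg := tr (PLeaf i).
Definition one : Alg := tr PEmpty.

Definition vee (fs : seq Alg) : Alg := mlin graft fs.
Definition vee2 (fs : seq Alg2) : Alg2 := mlin graft2 fs.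

Definition linext (X : choiceType) (h : ptree -> {malg K[X]}) (f : Alg)
  : {malg K[X]} := \sum_(t <- (msupp f : seq ptree)) f@_t *: h t.

(* the co-addition: the unital Mag_omega-algebra homomorphism with
   x_i |-> x_i (x) 1 + 1 (x) x_i *)
Fixpoint delta_t (t : ptree) : Alg2 :=
  match t with
  | PEmpty => << (PEmpty, PEmpty) >>
  | PLeaf i => << (PLeaf i, PEmpty) >> + << (PEmpty, PLeaf i) >>
  | PNode ts => vee2 (map delta_t ts)
  end.

Definition coadd (f : Alg) : Alg2 := linext delta_t f.

Definition tens_one (f : Alg) : Alg2 := linext (fun t => << (t, PEmpty) >>) f.
Definition one_tens (f : Alg) : Alg2 := linext (fun t => << (PEmpty, t) >>) f.

Definition primitive (f : Alg) : Prop := coadd f = tens_one f + one_tens f.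

Definition multilinear (n : nat) (f : Alg) : Prop :=
  forall t, t \in msupp f -> reduced t && perm_eq (leaves t) (iota 0 n).

Definition in_Mag (f : Alg) : Prop := forall t, t \in msupp f -> binary t.

Definition PrimMag (n : nat) (f : Alg) : Prop :=
  [/\ multilinear n f, in_Mag f & primitive f].

Definition PrimMagw (n : nat) (f : Alg) : Prop :=
  multilinear n f /\ primitive f.

Fixpoint subst_t (s : nat -> Alg) (t : ptree) : Alg :=
  match t with
  | PEmpty => one
  | PLeaf i => s i
  | PNode ts => vee (map (subst_t s) ts)
  end.

Definition subst (s : nat -> Alg) (f : Alg) : Alg := linext (subst_t s) f.

Definition rename (r : nat -> nat) (f : Alg) : Alg :=
  subst (fun i => xvar (r i)) f.

(* operadic composition f(g_0, ..., g_(k-1)) where g_i has arity ns_i: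
   the variables of g_i are shifted by ns_0 + ... + ns_(i-1) *)
Definition ocomp (f : Alg) (gs : seq Alg) (ns : seq nat) : Alg :=
  subst (fun i => rename (addn (sumn (take i ns))) (nth 0 gs i)) f.

Definition perm_nat (n : nat) (s : 'S_n) (j : nat) : nat :=
  if @insub nat (fun j => (j < n)%N) _ j is Some i then val (s i) else j.

(* the span of what is obtained from the elements of arity 2 and 3 of the
   family P by iterated operadic composition and symmetric group actions
   (the suboperad generated by P(2) and P(3), identity included) *)
Inductive gen23 (P : nat -> Alg -> Prop) : nat -> Alg -> Prop :=
  | gen23_id : gen23 P 1 (xvar 0)
  | gen23_2 f : P 2%N f -> gen23 P 2 f
  | gen23_3 f : P 3%N f -> gen23 P 3 f
  | gen23_comp k f (gs : seq Alg) (ns : seq nat) :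
      gen23 P k f -> size gs = k -> size ns = k ->
      (forall i, (i < k)%N -> gen23 P (nth 0%N ns i) (nth 0 gs i)) ->
      gen23 P (sumn ns) (ocomp f gs ns)
  | gen23_perm n f (s : 'S_n) :
      gen23 P n f -> gen23 P n (rename (perm_nat s) f)
  | gen23_0 n : gen23 P n 0
  | gen23_lin n (a : K) f g :
      gen23 P n f -> gen23 P n g -> gen23 P n (a *: f + g).

End Algebra.

From Pilot Require Import Defs.
From HB Require Import structures.
From mathcomp Require Import all_boot all_algebra all_fingroup.
From mathcomp Require Import finmap.
From mathcomp.multinomials Require Import monalg.
From mathcomp Require Import zify.

Set Implicit Arguments.
Unset Strict Implicit.
Unset Printing Implicit Defensive.

Import GRing.Theory.
Local Open Scope ring_scope.

(* Let W be the span of x_0 and of the trees with at least three leaves other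
   than ((x_0 x_0) (x_0 x_0)).  Every element f of the suboperad generated in
   arities 2 and 3 satisfies f(a_0, a_1, ...) \in W whenever all a_i \in W.
   In arity 2 the primitives are the multiples of x_0 x_1 - x_1 x_0, and in a
   commutator of elements of W the only tree with two leaves, x_0 x_0, cancels,
   while ((x_0 x_0) (x_0 x_0)) cannot occur; in arity 3, substituting trees with
   1 or at least 3 leaves into a tree with 3 leaves gives 3 or at least 5
   leaves.  Composition, renaming of variables and linear combinations preserve
   the property.  The explicit primitive p4 of degree 4, however, becomes after
   the substitution x_i := x_0 an element in which ((x_0 x_0) (x_0 x_0)) has
   coefficient 1.  Neither the characteristic of K nor binarity of the trees
   plays any role. *)

Lemma ptree_ind_in (P : ptree -> Prop) :
  P PEmpty -> (forall i, P (PLeaf i)) ->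
  (forall ts, {in ts, forall t, P t} -> P (PNode ts)) -> forall t, P t.
Proof.
move=> P0 Pleaf Pnode; fix F 1; case=> [|i|ts]; [exact: P0 | exact: Pleaf | apply: Pnode].
move: ts; fix G 1; case=> [|t ts] u; first by rewrite in_nil => ?; discriminate.
by rewrite in_cons => /predU1P[-> | /G]; [apply: F | apply].
Qed.

Definition nleaves (t : ptree) := size (leaves t).

Lemma graft_filter ts : graft [seq t <- ts | t != PEmpty] = graft ts.
Proof. by rewrite /graft filter_id. Qed.

Lemma graft1 t : graft [:: t] = t.
Proof. by rewrite /graft /=; case: eqP. Qed.

Lemma graft_pair x z : x != PEmpty -> z != PEmpty -> graft [:: x; z] = PNode [:: x; z].
Proof. by move=> nx nz; rewrite /graft /= nx nz. Qed.

Lemma graft_insert_empty n ts : graft (take n ts ++ PEmpty :: drop n ts) = graft ts.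
Proof.
by rewrite -graft_filter -[RHS]graft_filter filter_cat /= -filter_cat cat_take_drop.
Qed.

Lemma leaves_graft ts : leaves (graft ts) = flatten (map leaves ts).
Proof.
have -> : flatten (map leaves ts) = flatten (map leaves [seq t <- ts | t != PEmpty]).
  by elim: ts => [|t ts IH] //=; case: eqP => [->|] /=; rewrite IH.
by rewrite /graft; case: [seq t <- ts | _] => [|t1 [|t2 r]] //=; rewrite cats0.
Qed.

Lemma nleaves_graft ts : nleaves (graft ts) = sumn (map nleaves ts).
Proof. by rewrite /nleaves leaves_graft size_flatten /shape -map_comp. Qed.

Lemma nleaves_node ts : nleaves (PNode ts) = sumn (map nleaves ts).
Proof. by rewrite /nleaves /= size_flatten /shape -map_comp. Qed.

Section LinearExtension.
Variables (K : fieldType) (Y X : choiceType).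
Implicit Types (h : Y -> {malg K[X]}) (f : {malg K[Y]}).

(* [linext] of Defs is [lin_ext] on trees, and the two are convertible: this is
   how [subst s], [coadd], [tens_one] and [one_tens] inherit the lemmas below. *)
Definition lin_ext h f : {malg K[X]} := \sum_(y <- msupp f) f@_y *: h y.

Lemma lin_extEw h f (d : {fset Y}) : (msupp f `<=` d)%fset ->
  lin_ext h f = \sum_(y <- d) f@_y *: h y.
Proof.
move=> le; rewrite /lin_ext (big_fset_incl _ le) //= => y _ /mcoeff_outdom ->.
by rewrite scale0r.
Qed.

Lemma lin_ext_is_linear h : linear (lin_ext h).
Proof.
move=> a f g; have le := fsubset_trans (msuppD_le (a *: f) g) (fsetSU _ (msuppZ_le a f)).
rewrite (lin_extEw _ le) (lin_extEw _ (fsubsetUl _ (msupp g))).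
rewrite (lin_extEw _ (fsubsetUr (msupp f) _)) scaler_sumr -big_split /=.
by apply: eq_bigr => y _; rewrite mcoeffD mcoeffZ scalerDl scalerA.
Qed.

HB.instance Definition _ h :=
  GRing.isLinear.Build K {malg K[Y]} {malg K[X]} _ (lin_ext h) (lin_ext_is_linear h).

Lemma lin_extU h y : lin_ext h << y >> = h y.
Proof. by rewrite (lin_extEw _ msuppU_le) big_seq_fset1 mcoeffUU scale1r. Qed.

Lemma eq_lin_ext h1 h2 : h1 =1 h2 -> lin_ext h1 =1 lin_ext h2.
Proof. by move=> eq_h f; apply: eq_bigr => y _; rewrite eq_h. Qed.

Lemma lin_ext_sum_fun I (r : seq I) (F : I -> Y -> {malg K[X]}) f :
  lin_ext (fun y => \sum_(i <- r) F i y) f = \sum_(i <- r) lin_ext (F i) f.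
Proof.
by rewrite /lin_ext (eq_bigr _ (fun y _ => scaler_sumr _ _ _ _)) exchange_big.
Qed.

Lemma lin_ext_scale_fun c h f : lin_ext (fun y => c *: h y) f = c *: lin_ext h f.
Proof. by rewrite /lin_ext scaler_sumr; apply: eq_bigr => y _; rewrite !scalerA mulrC. Qed.

End LinearExtension.

Lemma lin_ext_id (K : fieldType) (Y : choiceType) (f : {malg K[Y]}) :
  lin_ext (fun y => << y >>) f = f.
Proof.
rewrite [RHS]monalgE; apply: eq_bigr => y _; apply/malgP => k.
by rewrite mcoeffZ !mcoeffU; case: eqP; rewrite ?mulr1 ?mulr0.
Qed.

Lemma lin_ext_comp (K : fieldType) (Y Z X : choiceType) (h : Z -> {malg K[X]})
    (phi : Y -> {malg K[Z]}) (f : {malg K[Y]}) :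
  lin_ext h (lin_ext phi f) = lin_ext (fun y => lin_ext h (phi y)) f.
Proof.
by rewrite [lin_ext phi f]/lin_ext linear_sum; apply: eq_bigr => y _; rewrite linearZ.
Qed.

Lemma lin_ext_comm (K : fieldType) (Y Z X : choiceType) (H : Y -> Z -> {malg K[X]})
    (f : {malg K[Y]}) (g : {malg K[Z]}) :
  lin_ext (fun y => lin_ext (H y) g) f = lin_ext (fun z => lin_ext (H^~ z) f) g.
Proof.
rewrite /lin_ext (eq_bigr _ (fun y _ => scaler_sumr _ _ _ _)) exchange_big /=.
rewrite [RHS](eq_bigr _ (fun z _ => scaler_sumr _ _ _ _)) /=.
by apply: eq_bigr => z _; apply: eq_bigr => y _; rewrite !scalerA mulrC.
Qed.

Section Multilinear.
Variables (K : fieldType) (X : choiceType).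
Implicit Types (g : seq X -> X) (fs : seq {malg K[X]}).

Lemma mlin_nil g : @mlin K X g [::] = << g [::] >>.
Proof. by rewrite /mlin big_seq1 scale1r. Qed.

Lemma mlin_cons g f fs :
  mlin g (f :: fs) = lin_ext (fun x => mlin (fun l => g (x :: l)) fs) f.
Proof.
rewrite /mlin /= big_allpairs_dep; apply: eq_bigr => x _.
by rewrite scaler_sumr; apply: eq_bigr => c _; rewrite scalerA.
Qed.

Lemma eq_mlin g1 g2 fs : g1 =1 g2 -> mlin g1 fs = mlin g2 fs.
Proof. by move=> eq_g; apply: eq_bigr => c _; rewrite eq_g. Qed.

Lemma mlin_U g xs : @mlin K X g [seq << x >> | x <- xs] = << g xs >>.
Proof.
elim: xs g => [|x xs IH] g /=; first exact: mlin_nil.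
by rewrite mlin_cons lin_extU IH.
Qed.

Lemma mlin_insertU g x fs1 fs2 :
  mlin g (fs1 ++ << x >> :: fs2) =
  mlin (fun l => g (take (size fs1) l ++ x :: drop (size fs1) l)) (fs1 ++ fs2).
Proof.
elim: fs1 g => [|f fs1 IH] g /=.
  by rewrite mlin_cons lin_extU; apply: eq_mlin => l; rewrite take0 drop0.
by rewrite !mlin_cons; apply: eq_lin_ext => y; rewrite IH.
Qed.

Lemma mlin_lin_ext (Y : choiceType) (phi : Y -> {malg K[X]}) g (fs : seq {malg K[Y]}) :
  mlin g (map (lin_ext phi) fs) =
  \sum_(c <- lin_lists fs) c.1 *: mlin g (map phi c.2).
Proof.
elim: fs g => [|f fs IH] g /=; first by rewrite big_seq1 scale1r.
rewrite mlin_cons (eq_lin_ext (fun x => IH (fun l => g (x :: l)))) lin_ext_comp.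
rewrite big_allpairs_dep {1}/lin_ext; apply: eq_bigr => y _ /=.
rewrite lin_ext_sum_fun scaler_sumr; apply: eq_bigr => c _.
by rewrite lin_ext_scale_fun -mlin_cons scalerA.
Qed.

Lemma mem_lin_lists fs c :
  c \in lin_lists fs -> all2 (fun x f => x \in msupp f) c.2 fs.
Proof.
elim: fs c => [|f fs IH] c /=; first by rewrite inE => /eqP ->.
by case/allpairsPdep => y [d [yf dfs ->]] /=; rewrite yf IH.
Qed.

End Multilinear.

Section Support.
Variables (K : fieldType) (X : choiceType).
Implicit Types (P Q : pred X) (f : {malg K[X]}).

Definition supported_on P : {pred {malg K[X]}} := [pred f | all P (msupp f)].

Lemma supported_onP P f : reflect {subset msupp f <= P} (f \in supported_on P).
Proof. exact: allP. Qed.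

Lemma supported_on_closed P : subsemimod_closed (supported_on P).
Proof.
split; first split.
- by apply/supported_onP => x; rewrite msupp0.
- move=> f g /supported_onP Pf /supported_onP Pg; apply/supported_onP => x.
  by move/(fsubsetP (msuppD_le f g)); rewrite in_fsetU => /orP[/Pf | /Pg].
- by move=> c f /supported_onP Pf; apply/supported_onP => x /(fsubsetP (msuppZ_le c f)) /Pf.
Qed.

HB.instance Definition _ P :=
  GRing.isSubmodClosed.Build K {malg K[X]} (supported_on P) (supported_on_closed P).

Lemma supported_onU P x : P x -> << x >> \in supported_on P.
Proof.
by move=> Px; apply/supported_onP => y /(fsubsetP msuppU_le); rewrite inE => /eqP ->.
Qed.

Lemma supported_on_sub P Q f : {subset P <= Q} ->
  f \in supported_on P -> f \in supported_on Q.
Proof. by move=> PQ /supported_onP Pf; apply/supported_onP => x /Pf /PQ. Qed.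

Lemma supported_on_coef0 P f x : f \in supported_on P -> ~~ P x -> f@_x = 0.
Proof. by move=> /supported_onP Pf nPx; apply: mcoeff_outdom; apply: contra nPx => /Pf. Qed.

Lemma mcoeff_scaleD (a b : K) (u v : {malg K[X]}) x :
  (a *: u + b *: v)@_x = a * u@_x + b * v@_x.
Proof. by rewrite mcoeffD; congr (_ + _); apply: mcoeffZ. Qed.

Lemma supported_on_lin_ext (Y : choiceType) P (h : Y -> {malg K[X]}) (f : {malg K[Y]}) :
  (forall y, y \in msupp f -> h y \in supported_on P) -> lin_ext h f \in supported_on P.
Proof. by move=> Ph; rewrite /lin_ext big_seq; apply: rpred_sum => y /Ph /rpredZ. Qed.

Lemma supported_on_mlin P g (fs : seq {malg K[X]}) :
  (forall xs, all2 (fun x f => x \in msupp f) xs fs -> P (g xs)) ->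
  mlin g fs \in supported_on P.
Proof.
move=> Pg; rewrite /mlin big_seq; apply: rpred_sum => c /mem_lin_lists /Pg Pc.
exact/rpredZ/supported_onU.
Qed.

End Support.

Section Substitution.
Variable K : fieldType.
Implicit Types (s : nat -> Alg K) (f u v : Alg K) (fs : seq (Alg K)).

HB.instance Definition _ s :=
  GRing.isLinear.Build K (Alg K) (Alg K) _ (subst s) (lin_ext_is_linear (subst_t s)).

Lemma vee_nil : vee [::] = Defs.one K.
Proof. exact: mlin_nil. Qed.

Lemma vee1 f : vee [:: f] = f.
Proof.
rewrite /vee mlin_cons -[RHS]lin_ext_id; apply: eq_lin_ext => x.
by rewrite mlin_nil graft1.
Qed.

Lemma vee_drop_one fs1 fs2 : vee (fs1 ++ Defs.one K :: fs2) = vee (fs1 ++ fs2).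
Proof. by rewrite /vee mlin_insertU; apply: eq_mlin => l; rewrite graft_insert_empty. Qed.

Lemma vee_filter_empty (F : ptree -> Alg K) : F PEmpty = Defs.one K ->
  forall pre ts, vee (pre ++ map F ts) = vee (pre ++ map F [seq t <- ts | t != PEmpty]).
Proof.
move=> F0 pre ts; elim: ts pre => [|t ts IH] pre //=.
case: eqP => [->|_] /=; first by rewrite F0 vee_drop_one IH.
by rewrite -!cat_rcons IH.
Qed.

Lemma vee_pairE u v :
  vee [:: u; v] = lin_ext (fun x => lin_ext (fun z => tr K (graft [:: x; z])) v) u.
Proof.
rewrite /vee mlin_cons; apply: eq_lin_ext => x; rewrite mlin_cons.
by apply: eq_lin_ext => z; rewrite mlin_nil.
Qed.

Lemma vee_pairE_r u v :
  vee [:: u; v] = lin_ext (fun z => lin_ext (fun x => tr K (graft [:: x; z])) u) v.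
Proof. by rewrite vee_pairE lin_ext_comm. Qed.

Lemma vee_pair_linl a u u' v :
  vee [:: a *: u + u'; v] = a *: vee [:: u; v] + vee [:: u'; v].
Proof. by rewrite !vee_pairE linearP. Qed.

Lemma vee_pair_linr a u v v' :
  vee [:: u; a *: v + v'] = a *: vee [:: u; v] + vee [:: u; v'].
Proof. by rewrite !vee_pairE_r linearP. Qed.

Lemma subst_tr s t : subst s << t >> = subst_t s t.
Proof. exact: lin_extU. Qed.

Lemma subst_t_graft s ts : subst_t s (graft ts) = vee (map (subst_t s) ts).
Proof.
rewrite -[vee _]/(vee ([::] ++ _)) (@vee_filter_empty (subst_t s)) //= -graft_filter.
by rewrite /graft filter_id; case: [seq t <- ts | _] => [|t1 [|t2 r]] /=;
  rewrite ?vee_nil ?vee1.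
Qed.

Lemma subst_vee s fs : subst s (vee fs) = vee (map (subst s) fs).
Proof.
rewrite [in RHS]/vee mlin_lin_ext [vee fs]/vee /mlin linear_sum.
by apply: eq_bigr => c _; rewrite linearZ /= subst_tr subst_t_graft.
Qed.

Lemma eq_subst_t s1 s2 : s1 =1 s2 -> subst_t s1 =1 subst_t s2.
Proof.
move=> eq_s; elim/ptree_ind_in => [|i|ts IH] //=.
by congr vee; apply/eq_in_map.
Qed.

Lemma subst_subst s s' f : subst s (subst s' f) = subst (fun i => subst s (s' i)) f.
Proof.
rewrite [LHS](lin_ext_comp (subst_t s) (subst_t s')); apply: eq_lin_ext.
elim/ptree_ind_in => [|i|ts IH] //=; first exact: lin_extU.
by rewrite -[LHS]/(subst s (vee _)) subst_vee -map_comp; congr vee; apply/eq_in_map.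
Qed.

Lemma subst_rename s r f : subst s (rename r f) = subst (s \o r) f.
Proof.
by rewrite subst_subst; apply: eq_lin_ext => t; apply: eq_subst_t => i; apply: subst_tr.
Qed.

End Substitution.

(* Integer combinations of keys, as lists.  The coproduct of an explicit element
   is computed on them, so that its primitivity is decided by [vm_compute]. *)
Fixpoint zcoef (X : eqType) (l : seq (int * X)) (k : X) : int :=
  if l is p :: l' then (if p.2 == k then p.1 else 0) + zcoef l' k else 0.

Definition zlin_eqb (X : eqType) (l1 l2 : seq (int * X)) :=
  all (fun k => zcoef l1 k == zcoef l2 k) (map snd (l1 ++ l2)).

Fixpoint zprod (X : Type) (ls : seq (seq (int * X))) : seq (int * seq X) :=
  if ls is l :: ls' then [seq (p.1 * c.1, p.2 :: c.2) | p <- l, c <- zprod ls']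
  else [:: (1, [::])].

Fixpoint zcoadd (t : ptree) : seq (int * (ptree * ptree)) :=
  match t with
  | PEmpty => [:: (1, (PEmpty, PEmpty))]
  | PLeaf i => [:: (1, (PLeaf i, PEmpty)); (1, (PEmpty, PLeaf i))]
  | PNode ts => [seq (c.1, graft2 c.2) | c <- zprod (map zcoadd ts)]
  end%Z.

Definition zcoadd_seq (l : seq (int * ptree)) : seq (int * (ptree * ptree)) :=
  flatten [seq [seq (p.1 * q.1, q.2) | q <- zcoadd p.2] | p <- l].

Section IntegerCombinations.
Variable K : fieldType.

Definition zlin_val (X : choiceType) (l : seq (int * X)) : {malg K[X]} :=
  \sum_(p <- l) p.1%:~R *: << p.2 >>.

Lemma zlin_val_coef (X : choiceType) (l : seq (int * X)) k :
  (zlin_val l)@_k = (zcoef l k)%:~R.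
Proof.
elim: l => [|p l IH]; first by rewrite /zlin_val big_nil mcoeff0.
rewrite /zlin_val big_cons mcoeffD -/(zlin_val l) IH mcoeffZ mcoeffU /= intrD.
by case: eqP; rewrite ?mulr1 ?mulr0.
Qed.

Lemma zlin_eqbP (X : choiceType) (l1 l2 : seq (int * X)) :
  zlin_eqb l1 l2 -> zlin_val l1 = zlin_val l2.
Proof.
have zcoef0 l k : k \notin map snd l -> zcoef l k = 0.
  elim: l => [|p l IH] //=; rewrite in_cons negb_or => /andP[nkp /IH ->].
  by rewrite eq_sym (negbTE nkp).
move/allP=> eq_l; apply/malgP => k; rewrite !zlin_val_coef.
have [/eq_l/eqP -> //|] := boolP (k \in map snd (l1 ++ l2)).
by rewrite map_cat mem_cat negb_or => /andP[n1 n2]; rewrite !zcoef0.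
Qed.

Lemma zlin_val_supported (X : choiceType) (P : pred X) (l : seq (int * X)) :
  all (fun p => P p.2) l -> zlin_val l \in supported_on P.
Proof.
move/allP=> Pl; rewrite /zlin_val big_seq; apply: rpred_sum => p /Pl Pp.
exact/rpredZ/supported_onU.
Qed.

Lemma lin_ext_zlin_val (Y X : choiceType) (h : Y -> {malg K[X]}) (l : seq (int * Y)) :
  lin_ext h (zlin_val l) = \sum_(p <- l) p.1%:~R *: h p.2.
Proof. by rewrite linear_sum; apply: eq_bigr => p _; rewrite linearZ /= lin_extU. Qed.

Lemma mlin_zlin_val (X : choiceType) (g : seq X -> X) (ls : seq (seq (int * X))) :
  mlin g (map (@zlin_val X) ls) = zlin_val [seq (c.1, g c.2) | c <- zprod ls].
Proof.
elim: ls g => [|l ls IH] g /=; first by rewrite mlin_nil /zlin_val big_seq1 scale1r.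
rewrite mlin_cons (eq_lin_ext (fun x => IH (fun l => g (x :: l)))).
rewrite /zlin_val linear_sum big_map big_allpairs_dep; apply: eq_bigr => p _.
rewrite linearZ /= lin_extU big_map scaler_sumr; apply: eq_bigr => c _.
by rewrite intrM scalerA.
Qed.

Lemma delta_t_zcoadd t : delta_t K t = zlin_val (zcoadd t).
Proof.
elim/ptree_ind_in: t => [|i|ts IH] /=.
- by rewrite /zlin_val big_seq1 scale1r.
- by rewrite /zlin_val big_cons big_seq1; congr (_ + _); rewrite scale1r.
- by rewrite /vee2 ((eq_in_map _ _ _).1 IH) map_comp mlin_zlin_val.
Qed.

HB.instance Definition _ :=
  GRing.isLinear.Build K (Alg K) (Alg2 K) _ (@coadd K) (lin_ext_is_linear (@delta_t K)).

Lemma coadd_zlin_val l : coadd (zlin_val l) = zlin_val (zcoadd_seq l).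
Proof.
rewrite [coadd _]lin_ext_zlin_val /zcoadd_seq /zlin_val big_flatten /= big_map.
apply: eq_bigr => p _; rewrite delta_t_zcoadd big_map scaler_sumr.
by apply: eq_bigr => q _; rewrite intrM scalerA.
Qed.

Lemma primitive_zlin_val l :
  zlin_eqb (zcoadd_seq l)
    ([seq (p.1, (p.2, PEmpty)) | p <- l] ++ [seq (p.1, (PEmpty, p.2)) | p <- l]) ->
  primitive (zlin_val l).
Proof.
move/zlin_eqbP; rewrite /primitive coadd_zlin_val => ->.
rewrite [tens_one _]lin_ext_zlin_val [one_tens _]lin_ext_zlin_val.
by rewrite /zlin_val big_cat !big_map.
Qed.

End IntegerCombinations.

Definition T01 := PNode [:: PLeaf 0; PLeaf 1].
Definition T10 := PNode [:: PLeaf 1; PLeaf 0].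

Lemma reduced_nleaves_gt0 t : reduced t -> (0 < nleaves t)%N.
Proof.
elim/ptree_ind_in: t => [|i|ts IH] //= /andP[size_ts red_ts].
case: ts size_ts red_ts IH => [|t ts] //= _ /andP[red_t _] IH.
by rewrite nleaves_node /= addn_gt0 IH ?mem_head.
Qed.

Lemma reduced_nleaves1 t : reduced t -> nleaves t = 1%N -> exists i, t = PLeaf i.
Proof.
case: t => [|i|[|t1 [|t2 ts]]] //=; first by exists i.
move=> /and3P[/reduced_nleaves_gt0 + /reduced_nleaves_gt0 + _].
rewrite nleaves_node /=; lia.
Qed.

Lemma reduced_deg2 t : reduced t -> perm_eq (leaves t) [:: 0; 1]%N -> t = T01 \/ t = T10.
Proof.
move=> red_t pe; have := perm_size pe; rewrite -/(nleaves t).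
case: t red_t pe => [|i|[|t1 [|t2 ts]]] //=.
move=> /and3P[/[dup] red1 /reduced_nleaves_gt0 pos1 /[dup] red2 /reduced_nleaves_gt0 pos2].
rewrite nleaves_node /=.
case: ts => [_ pe | t3 ts /andP[/reduced_nleaves_gt0 + _] _] /=; last by lia.
rewrite addn0 => n12.
have [|i ei] := reduced_nleaves1 red1; first by lia.
have [|j ej] := reduced_nleaves1 red2; first by lia.
move: pe; rewrite ei ej /= => pe.
have mi : i \in [:: 0; 1]%N by rewrite -(perm_mem pe) mem_head.
have mj : j \in [:: 0; 1]%N by rewrite -(perm_mem pe) !inE eqxx orbT.
have := perm_uniq pe; move: mi mj; rewrite !inE.
by case/orP=> /eqP-> /orP[]/eqP->; [|left|right|].
Qed.

Section BinaryPrimitives.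
Variable K : fieldType.
Implicit Type f : Alg K.

Lemma multilinear2E f : multilinear 2 f -> f = f@_T01 *: tr K T01 + f@_T10 *: tr K T10.
Proof.
move=> mf; apply/malgP => k; rewrite mcoeff_scaleD !mcoeffU.
have [<-|n01] := eqVneq T01 k; first by rewrite mulr1 mulr0 addr0.
have [<-|n10] := eqVneq T10 k; first by rewrite mulr1 mulr0 add0r.
rewrite !mulr0 addr0; apply: mcoeff_outdom; apply/negP => /mf /andP[red_k pe].
by case: (reduced_deg2 red_k pe) => ek; [move: n01 | move: n10]; rewrite ek eqxx.
Qed.

Lemma tens_one_supported f : tens_one f \in supported_on [pred p | p.2 == PEmpty].
Proof. by apply: supported_on_lin_ext => t _; apply: supported_onU. Qed.

Lemma one_tens_supported f : one_tens f \in supported_on [pred p | p.1 == PEmpty].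
Proof. by apply: supported_on_lin_ext => t _; apply: supported_onU. Qed.

Lemma coadd_primitive_coef f x y : primitive f -> x != PEmpty -> y != PEmpty ->
  (coadd f)@_(x, y) = 0.
Proof.
move=> pf nx ny; rewrite pf mcoeffD.
rewrite [X in X + _](supported_on_coef0 (x := (x, y)) (tens_one_supported f) ny) add0r.
exact: (supported_on_coef0 (x := (x, y)) (one_tens_supported f) nx).
Qed.

Lemma coadd_tr_coef01 t : zcoef (zcoadd t) (PLeaf 0, PLeaf 1) = 1 ->
  (coadd (tr K t))@_(PLeaf 0, PLeaf 1) = 1.
Proof. by move=> c1; rewrite [coadd _]lin_extU delta_t_zcoadd zlin_val_coef c1. Qed.

Lemma primitive2_antisym f : multilinear 2 f -> primitive f -> f@_T10 = - f@_T01.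
Proof.
(* Coefficients of closed elements are kept in separate subgoals: rewriting
   with two of them in sight makes Rocq compare them by evaluation. *)
move=> mf pf; apply/eqP; rewrite -addr_eq0 addrC; apply/eqP.
rewrite -(coadd_primitive_coef (x := PLeaf 0) (y := PLeaf 1) pf isT isT).
rewrite {3}(multilinear2E mf) linearP linearZ /=; symmetry.
by rewrite mcoeff_scaleD; congr (_ + _); rewrite coadd_tr_coef01 ?mulr1 //; vm_compute.
Qed.

Lemma primitive2E f : multilinear 2 f -> primitive f -> f = f@_T01 *: (tr K T01 - tr K T10).
Proof.
by move=> mf pf; rewrite {1}(multilinear2E mf) (primitive2_antisym mf pf) scalerBr scaleNr.
Qed.

End BinaryPrimitives.

Definition T2 := PNode [:: PLeaf 0; PLeaf 0].
Definition Tsq := PNode [:: T2; T2].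

Definition tame t := (2 < nleaves t)%N && (t != Tsq).
Definition tame_or_x0 t := (t == PLeaf 0) || tame t.

(* A sum of k numbers from {1, 3, 4, ...} is at least k and never k + 1. *)
Definition skips_one (k n : nat) := (k <= n)%N && (n != k.+1).

Lemma skips_one_sumn ks ns : all2 skips_one ks ns -> skips_one (sumn ks) (sumn ns).
Proof.
elim: ks ns => [|k ks IH] [|n ns] //= /andP[kn /IH].
by move: kn; rewrite /skips_one => /andP[? ?] /andP[? ?]; apply/andP; split; lia.
Qed.

Lemma tame_or_x0_skips_one t : tame_or_x0 t -> skips_one 1 (nleaves t).
Proof.
by case/orP=> [/eqP -> // | /andP[? _]]; rewrite /skips_one; apply/andP; split; lia.
Qed.

Lemma tame_graft_pair x z : tame_or_x0 x -> tame_or_x0 z -> tame x || tame z ->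
  tame (graft [:: x; z]).
Proof.
have nonempty t : tame_or_x0 t -> t != PEmpty by case: t.
have pos t : tame_or_x0 t -> (0 < nleaves t)%N.
  by case/orP=> [/eqP -> // | /andP[? _]]; lia.
move=> tx tz txz; rewrite graft_pair ?nonempty //; apply/andP; split.
  rewrite nleaves_node /= addn0; have := pos _ tx; have := pos _ tz.
  by case/orP: txz => /andP[? _]; lia.
by apply/eqP => -[ex _]; move: tx; rewrite ex.
Qed.

Notation tame_span K := (@supported_on K ptree tame_or_x0).

Section Invariant.
Variable K : fieldType.
Implicit Types (a : nat -> Alg K) (f u v w : Alg K).

Lemma subst_t_skips_one a t :
  (forall i, a i \in supported_on [pred u | skips_one 1 (nleaves u)]) ->
  subst_t a t \in supported_on [pred u | skips_one (nleaves t) (nleaves u)].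
Proof.
move=> Pa; elim/ptree_ind_in: t => [|i|ts IH] /=; [exact: supported_onU | exact: Pa |].
apply: supported_on_mlin => xs xs_ts; rewrite /= nleaves_graft nleaves_node.
apply: skips_one_sumn; elim: ts xs IH xs_ts => [|t ts IHts] [|x xs] //= IH /andP[xt xs_ts].
move: (supported_onP _ _ (IH t (mem_head t ts)) x xt); rewrite inE => ->.
rewrite IHts // => u u_ts.
by apply: IH; rewrite in_cons u_ts orbT.
Qed.

Lemma subst_multilinear3_tame f a : multilinear 3 f ->
  (forall i, a i \in tame_span K) -> subst a f \in supported_on tame.
Proof.
move=> mf Pa; apply: supported_on_lin_ext => t /mf /andP[_ /perm_size nt].
have Pa1 i := supported_on_sub tame_or_x0_skips_one (Pa i).
apply: supported_on_sub (subst_t_skips_one t Pa1) => u.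
rewrite /= /nleaves nt size_iota -/(nleaves u) /skips_one /tame => /andP[le3 ne4].
by rewrite unfold_in /nleaves le3; apply: contra ne4 => /eqP ->.
Qed.

Lemma tame_sub : {subset tame <= tame_or_x0}.
Proof. by move=> t; rewrite !unfold_in => tt; apply/orP; right. Qed.

Lemma xvar0_tame_span : xvar K 0 \in tame_span K.
Proof. by apply: supported_onU; rewrite /tame_or_x0 eqxx. Qed.

Lemma tame_span_decomp w : w \in tame_span K ->
  w - w@_(PLeaf 0) *: xvar K 0 \in supported_on tame.
Proof.
move/supported_onP=> Pw; apply/supported_onP => t.
rewrite -mcoeff_neq0 mcoeffB mcoeffZ mcoeffU.
have [<-|ne] := eqVneq (PLeaf 0) t; first by rewrite mulr1 subrr eqxx.
rewrite mulr0 subr0 mcoeff_neq0 => /Pw.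
by rewrite !unfold_in /tame_or_x0 eq_sym (negbTE ne).
Qed.

Lemma vee_pair_supported (P Q R : pred ptree) u v :
  u \in supported_on P -> v \in supported_on Q ->
  {in P & Q, forall x z, R (graft [:: x; z])} -> vee [:: u; v] \in supported_on R.
Proof.
move=> /supported_onP Pu /supported_onP Qv PQR.
apply: supported_on_mlin => -[|x [|z [|? ?]]] /=; rewrite ?andbF // andbT => /andP[xu zv].
exact: PQR (Pu _ xu) (Qv _ zv).
Qed.

Lemma vee_pair_tame u v : u \in tame_span K -> v \in tame_span K ->
  vee [:: u; v] - (u@_(PLeaf 0) * v@_(PLeaf 0)) *: tr K T2 \in supported_on tame.
Proof.
move=> Su Sv; set a := u@_(PLeaf 0); set b := v@_(PLeaf 0).
have eu : u = a *: xvar K 0 + (u - a *: xvar K 0) by rewrite addrC subrK.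
have ev : v = b *: xvar K 0 + (v - b *: xvar K 0) by rewrite addrC subrK.
have vee_x0x0 : vee [:: xvar K 0; xvar K 0] = tr K T2 :=
  mlin_U K graft [:: PLeaf 0; PLeaf 0].
rewrite {1}eu vee_pair_linl {1}ev vee_pair_linr vee_x0x0 scalerDr scalerA.
rewrite addrAC [X in X + _]addrAC subrr add0r; apply: rpredD.
  apply/rpredZ/(vee_pair_supported xvar0_tame_span (tame_span_decomp Sv)) => x z tx tz.
  by apply: tame_graft_pair tx (tame_sub tz) _; apply/orP; right.
apply: (vee_pair_supported (tame_span_decomp Su) Sv) => x z tx tz.
by apply: tame_graft_pair (tame_sub tx) tz _; apply/orP; left.
Qed.

Lemma commutator_tame u v : u \in tame_span K -> v \in tame_span K ->
  vee [:: u; v] - vee [:: v; u] \in supported_on tame.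
Proof.
move=> Su Sv; have := rpredB (vee_pair_tame Su Sv) (vee_pair_tame Sv Su).
by rewrite [v@_ _ * _]mulrC opprB addrA subrK.
Qed.

Lemma subst_primitive2_tame f a : multilinear 2 f -> primitive f ->
  (forall i, a i \in tame_span K) -> subst a f \in tame_span K.
Proof.
move=> mf pf Pa; rewrite (primitive2E mf pf) linearZ /= linearB /= !subst_tr /=.
exact/rpredZ/(supported_on_sub tame_sub)/commutator_tame.
Qed.

Lemma gen23_subst_tame_span (P : nat -> Alg K -> Prop) :
  (forall f, P 2%N f -> multilinear 2 f /\ primitive f) ->
  (forall f, P 3%N f -> multilinear 3 f) ->
  forall n f, gen23 P n f -> forall a, (forall i, a i \in tame_span K) ->
  subst a f \in tame_span K.
Proof.
move=> P2 P3 n f; elim=> {n f} [|f /P2[mf pf]|f /P3 mf|k f gs ns _ IHf size_gs _ _ IHgs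
  |n f s _ IHf|n|n c f g _ IHf _ IHg] a Pa.
- by rewrite subst_tr; apply: Pa.
- exact: subst_primitive2_tame.
- exact/(supported_on_sub tame_sub)/subst_multilinear3_tame.
- rewrite /ocomp subst_subst; apply: IHf => i; rewrite subst_rename.
  have [ltik|leki] := ltnP i k; first by apply: IHgs => // j; apply: Pa.
  by rewrite nth_default ?size_gs // linear0 rpred0.
- by rewrite subst_rename; apply: IHf => j; apply: Pa.
- by rewrite linear0 rpred0.
- by rewrite linearP /=; apply/rpredD/IHg => //; apply/rpredZ/IHf.
Qed.

End Invariant.

Definition p4 : seq (int * ptree) :=
  let x := PLeaf in let m a b := PNode [:: a; b] in
  [:: (-1, m (x 0) (m (x 3) (m (x 1) (x 2))));
      (1, m (x 1) (m (x 0) (m (x 3) (x 2))));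
      (1, m (x 2) (m (x 0) (m (x 3) (x 1))));
      (-1, m (x 1) (m (m (x 0) (x 3)) (x 2)));
      (-1, m (x 2) (m (m (x 0) (x 3)) (x 1)));
      (1, m (m (x 0) (x 3)) (m (x 1) (x 2)))].

Fixpoint collapse (t : ptree) : ptree :=
  match t with
  | PEmpty => PEmpty
  | PLeaf _ => PLeaf 0
  | PNode ts => graft (map collapse ts)
  end.

Section Counterexample.
Variable K : fieldType.

Lemma PrimMag_p4 : PrimMag 4 (zlin_val K p4).
Proof.
split; last by apply: primitive_zlin_val; vm_compute.
- apply/(supported_onP [pred t | reduced t && perm_eq (leaves t) (iota 0 4)]).
  by apply: zlin_val_supported; vm_compute.
- apply/(supported_onP binary).
  by apply: zlin_val_supported; vm_compute.
Qed.

Lemma subst_t_x0 t : subst_t (fun=> xvar K 0) t = tr K (collapse t).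
Proof.
elim/ptree_ind_in: t => [|i|ts IH] //=.
by rewrite ((eq_in_map _ _ _).1 IH) map_comp; apply: mlin_U.
Qed.

Lemma subst_x0_zlin_val l :
  subst (fun=> xvar K 0) (zlin_val K l) = zlin_val K [seq (p.1, collapse p.2) | p <- l].
Proof.
rewrite [subst _ _]lin_ext_zlin_val /zlin_val big_map.
by apply: eq_bigr => p _; rewrite subst_t_x0.
Qed.

Lemma subst_x0_p4_notin : subst (fun=> xvar K 0) (zlin_val K p4) \notin tame_span K.
Proof.
apply/negP => /(supported_on_coef0 (x := Tsq)) /(_ isT).
rewrite subst_x0_zlin_val zlin_val_coef.
have -> : zcoef [seq (p.1, collapse p.2) | p <- p4] Tsq = 1 by vm_compute.
by move/eqP; rewrite oner_eq0.
Qed.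

Lemma p4_not_generated (P : nat -> Alg K -> Prop) :
  (forall f, P 2%N f -> multilinear 2 f /\ primitive f) ->
  (forall f, P 3%N f -> multilinear 3 f) ->
  ~ gen23 P 4 (zlin_val K p4).
Proof.
move=> P2 P3 /(gen23_subst_tame_span P2 P3).
by move=> /(_ _ (fun=> xvar0_tame_span K)); apply/negP/subst_x0_p4_notin.
Qed.

End Counterexample.

Theorem corollary4p5p8 (K : fieldType) (charK0 : [pchar K]%R =i pred0) :
  ~ (forall f : Alg K, PrimMag 4 f -> gen23 (@PrimMag K) 4 f) /\
  ~ (forall f : Alg K, PrimMagw 4 f -> gen23 (@PrimMagw K) 4 f).
Proof.
have [ml4 _ pr4] := PrimMag_p4 K.
split=> [gen | genw].
- by apply: p4_not_generated (gen _ (PrimMag_p4 K)) => f [mf _ pf].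
- by apply: p4_not_generated (genw _ (conj ml4 pr4)) => f [mf pf].
Qed.
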